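(* Every CPS tensor $\mathcal{A}\in\mathbb{C}^{n\times n\times n\times n}$ can be written as \[ \mathcal{A}=\sum_{i=1}^R\alpha_i\big(p_i\otimes p_i\otimes\bar q_i\otimes\bar q_i+q_i\otimes q_i\otimes\bar p_i\otimes\bar p_i\big), \] with $\alpha_i\in\mathbb{R}$ and $p_i,q_i\in\mathbb{C}^n$ for $i=1,\dots,R$. If $\mathcal{A}$ has real entries, then the $p_i,q_i$ can be chosen in $\mathbb{R}^n$.
   Context: A tensor $\mathcal{A}\in\mathbb{C}^{n\times n\times n\times n}$ is conjugate partial-symmetric (CPS) if $\mathcal{A}_{ijkl}=\overline{\mathcal{A}_{klij}}$ and $\mathcal{A}_{ijkl}=\mathcal{A}_{jikl}=\mathcal{A}_{ijlk}$ for all indices. $(u\otimes v\otimes w\otimes z)_{ijkl}=u_iv_jw_kz_l$. *)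

From HB Require Import structures.
From mathcomp Require Import all_boot all_order all_algebra.
From mathcomp Require Import complex.
From mathcomp Require Import reals.
Set Implicit Arguments. Unset Strict Implicit. Unset Printing Implicit Defensive.
Import Order.TTheory GRing.Theory Num.Theory.
Local Open Scope ring_scope.
Local Open Scope complex_scope.

Definition tensor4 (T : Type) (n : nat) := 'I_n -> 'I_n -> 'I_n -> 'I_n -> T.

Definition is_CPS (R : realType) (n : nat) (A : tensor4 R[i] n) : Prop :=
  forall i j k l : 'I_n,
    [/\ A i j k l = (A k l i j)^*,
        A i j k l = A j i k l &
        A i j k l = A i j l k].

Definition outer4 (R : realType) (n : nat) (u v w z : 'I_n -> R[i]) : tensor4 R[i] n :=
  fun i j k l => u i * v j * w k * z l.

Definition conjv (R : realType) (n : nat) (v : 'I_n -> R[i]) : 'I_n -> R[i] :=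
  fun i => (v i)^*.

Definition CPS_decomp (R : realType) (n m : nat) (A : tensor4 R[i] n)
    (alpha : 'I_m -> R) (p q : 'I_m -> 'I_n -> R[i]) : Prop :=
  forall i j k l : 'I_n,
    A i j k l =
      \sum_(r < m) (alpha r)%:C *
         (outer4 (p r) (p r) (conjv (q r)) (conjv (q r)) i j k l
          + outer4 (q r) (q r) (conjv (p r)) (conjv (p r)) i j k l).

From HB Require Import structures.
From mathcomp Require Import all_boot all_order all_algebra.
From mathcomp Require Import complex.
From mathcomp Require Import reals.
From mathcomp Require Import ring.
Import Order.TTheory GRing.Theory Num.Theory.
Local Open Scope ring_scope.
Local Open Scope complex_scope.
Set Implicit Arguments. Unset Strict Implicit.

(* Let S_ab = e_a e_b^T + e_b e_a^T. The symmetries of a CPS tensor give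
   8 A = sum_{a,b,c,d} (A_abcd S_ab (x) S_cd + conj(A_abcd) S_cd (x) S_ab),
   and with z = x + i y each summand equals
   x (S (x) S' + S' (x) S) + i y (S (x) S' - S' (x) S).
   Polarization, S_ab = ((e_a + e_b)(e_a + e_b)^T - (e_a - e_b)(e_a - e_b)^T) / 2,
   writes both brackets as combinations of p p (x) q q +- q q (x) p p with real
   p, q. The "+" combination is a CPS term with real vectors; since
   (1 + i)^2 = 2 i, the CPS term of (1 + i) p and q is 2 i (p p (x) q q - q q (x) p p),
   which produces the "-" combination. For real A the second bracket never occurs. *)

Section Decomposable.
Variables (R : realType) (n : nat) (T : Type) (emb : T -> 'I_n -> R[i]).

Definition cps_term (alpha : R) (p q : 'I_n -> R[i]) : tensor4 R[i] n :=
  fun i j k l => alpha%:C * (outer4 p p (conjv q) (conjv q) i j k l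
                             + outer4 q q (conjv p) (conjv p) i j k l).

(* The vectors of the decomposition range over [T], seen in C^n through [emb]:
   [emb = id] gives complex vectors and [emb = realv] (below) real ones. *)
Definition decomposable (A : tensor4 R[i] n) : Prop :=
  exists m (alpha : 'I_m -> R) (p q : 'I_m -> T),
    CPS_decomp A alpha (fun r => emb (p r)) (fun r => emb (q r)).

Lemma decomposable_ext (A B : tensor4 R[i] n) :
  decomposable A -> (forall i j k l, A i j k l = B i j k l) -> decomposable B.
Proof.
by move=> [m [alpha [p [q decA]]]] eqAB; exists m, alpha, p, q => i j k l; rewrite -eqAB.
Qed.

Lemma decomposable0 : decomposable (fun _ _ _ _ => 0).
Proof.
have no_ord0 : 'I_0 -> T by case.
by exists 0, (fun _ => 0), no_ord0, no_ord0 => i j k l; rewrite big_ord0.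
Qed.

Lemma decomposable_term alpha p q : decomposable (cps_term alpha (emb p) (emb q)).
Proof. by exists 1, (fun _ => alpha), (fun _ => p), (fun _ => q) => i j k l; rewrite big_ord1. Qed.

Definition cat_ord (U : Type) m1 m2 (f : 'I_m1 -> U) (g : 'I_m2 -> U) (r : 'I_(m1 + m2)) : U :=
  match split r with inl r1 => f r1 | inr r2 => g r2 end.

Lemma cat_ord_lshift (U : Type) m1 m2 (f : 'I_m1 -> U) (g : 'I_m2 -> U) r :
  cat_ord f g (lshift m2 r) = f r.
Proof. by rewrite /cat_ord (unsplitK (inl r)). Qed.

Lemma cat_ord_rshift (U : Type) m1 m2 (f : 'I_m1 -> U) (g : 'I_m2 -> U) r :
  cat_ord f g (rshift m1 r) = g r.
Proof. by rewrite /cat_ord (unsplitK (inr r)). Qed.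

Lemma decomposableD (A B : tensor4 R[i] n) :
  decomposable A -> decomposable B -> decomposable (fun i j k l => A i j k l + B i j k l).
Proof.
move=> [m1 [a1 [p1 [q1 decA]]]] [m2 [a2 [p2 [q2 decB]]]].
exists (m1 + m2), (cat_ord a1 a2), (cat_ord p1 p2), (cat_ord q1 q2) => i j k l.
by rewrite big_split_ord decA decB /=; congr (_ + _); apply: eq_bigr => r _;
  rewrite ?cat_ord_lshift ?cat_ord_rshift.
Qed.

Lemma decomposable_sum (J : Type) (s : seq J) (F : J -> tensor4 R[i] n) :
  (forall t, decomposable (F t)) ->
  decomposable (fun i j k l => \sum_(t <- s) F t i j k l).
Proof.
move=> decF; elim: s => [|t s IHs].
  by apply: (decomposable_ext decomposable0) => i j k l; rewrite big_nil.
by apply: (decomposable_ext (decomposableD (decF t) IHs)) => i j k l; rewrite big_cons.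
Qed.

Lemma decomposableZ (c : R) (A : tensor4 R[i] n) :
  decomposable A -> decomposable (fun i j k l => c%:C * A i j k l).
Proof.
move=> [m [alpha [p [q decA]]]].
exists m, (fun r => c * alpha r), p, q => i j k l.
by rewrite decA mulr_sumr; apply: eq_bigr => r _; rewrite rmorphM mulrA.
Qed.

End Decomposable.

Section RealVectors.
Variables (R : realType) (n : nat).
Local Notation I := 'I_n.

Definition realv (u : I -> R) : I -> R[i] := fun x => (u x)%:C.

Lemma decomposable_realv (A : tensor4 R[i] n) :
  decomposable realv A -> decomposable id A.
Proof. by move=> [m [alpha [p [q decA]]]]; exists m, alpha, (realv \o p), (realv \o q). Qed.

Lemma cps_term_realv alpha u v i j k l :
  cps_term alpha (realv u) (realv v) i j k l =
  (alpha * (u i * u j * v k * v l + v i * v j * u k * u l))%:C.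
Proof. by rewrite /cps_term /outer4 /conjv /realv !conjc_real rmorphM rmorphD !rmorphM. Qed.

Lemma cps_term_skew alpha u v i j k l :
  cps_term alpha (fun x => (1 + 'i%C) * (u x)%:C) (realv v) i j k l =
  'i%C * (2 * alpha * (u i * u j * v k * v l - v i * v j * u k * u l))%:C.
Proof.
have conj_skew x : ((1 + 'i%C) * (u x)%:C)^*%C = (1 - 'i%C) * (u x)%:C.
  rewrite rmorphM; congr (_ * _); last exact: conjc_real.
  by apply/eqP; rewrite eq_complex /= !addr0 !subr0 add0r sub0r !eqxx.
rewrite /cps_term /outer4 /conjv /realv !conj_skew !conjc_real.
have i2 := @sqr_i R; ring: i2.
Qed.

End RealVectors.

Arguments realv {R n}.

Section Polarization.
Variable n : nat.
Local Notation I := 'I_n.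

Definition symprod (K : pzRingType) (u w : I -> K) (i j : I) : K := u i * w j + w i * u j.

Definition axpy (K : pzRingType) (s : K) (w u : I -> K) : I -> K := fun x => s * w x + u x.

Lemma symprod_polarization (F : numFieldType) (e x : F) u w v y i j k l :
  x * (symprod u w i j * symprod v y k l + e * (symprod v y i j * symprod u w k l)) =
  \sum_(s <- [:: 1; -1]) \sum_(t <- [:: 1; -1])
    let p := axpy s w u in let q := axpy t y v in
    x * s * t / 4 * (p i * p j * q k * q l + e * (q i * q j * p k * p l)).
Proof. by rewrite !big_cons !big_nil /symprod /axpy /=; field. Qed.

Variable R : realType.

Lemma decomposable_symprod_real (x : R) (u w v y : I -> R) :
  decomposable realv (fun i j k l =>
    (x * (symprod u w i j * symprod v y k l + symprod v y i j * symprod u w k l))%:C).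
Proof.
apply: (decomposable_ext (decomposable_sum [:: 1; -1] (fun s =>
  decomposable_sum [:: 1; -1] (fun t =>
  decomposable_term realv (x * s * t / 4) (axpy s w u) (axpy t y v))))) => i j k l.
rewrite -[X in (x * (_ + X))%:C]mul1r symprod_polarization rmorph_sum.
apply: eq_bigr => s _; rewrite rmorph_sum; apply: eq_bigr => t _.
by rewrite cps_term_realv /= mul1r.
Qed.

Lemma decomposable_symprod_skew (x : R) (u w v y : I -> R) :
  decomposable id (fun i j k l =>
    'i%C * (x * (symprod u w i j * symprod v y k l - symprod v y i j * symprod u w k l))%:C).
Proof.
apply: (decomposable_ext (decomposable_sum [:: 1; -1] (fun s =>
  decomposable_sum [:: 1; -1] (fun t =>
  decomposable_term id (x * s * t / 8)
    (fun z => (1 + 'i%C) * (axpy s w u z)%:C) (realv (axpy t y v)))))) => i j k l.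
rewrite -[X in (x * (_ + X))%:C]mulN1r symprod_polarization rmorph_sum mulr_sumr.
apply: eq_bigr => s _; rewrite rmorph_sum mulr_sumr; apply: eq_bigr => t _.
by rewrite cps_term_skew /=; congr (_ * _%:C); field.
Qed.

End Polarization.
Section Expansion.
Variables (K : comPzRingType) (n : nat).
Local Notation I := 'I_n.

Definition delta (a : I) : I -> K := fun x => (a == x)%:R.

Lemma sum_delta (F : I -> K) i : \sum_a delta a i * F a = F i.
Proof.
rewrite (bigD1 i) //= /delta eqxx mul1r big1 ?addr0 // => a /negbTE ->.
by rewrite mul0r.
Qed.

Lemma sum_symprod_delta (f : I -> I -> K) i j :
  \sum_a \sum_b f a b * symprod (delta a) (delta b) i j = f i j + f j i.
Proof.
rewrite (eq_bigr (fun a => delta a i * f a j + delta a j * f a i)) => [|a _].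
  by rewrite big_split /= !sum_delta.
rewrite -(sum_delta (f a) j) -(sum_delta (f a) i) !mulr_sumr -big_split.
by apply: eq_bigr => b _ /=; rewrite /symprod; ring.
Qed.

Lemma sum4_symprod_delta (f : I -> I -> I -> I -> K) i j k l :
  \sum_a \sum_b \sum_c \sum_d
    f a b c d * (symprod (delta a) (delta b) i j * symprod (delta c) (delta d) k l)
  = f i j k l + f i j l k + (f j i k l + f j i l k).
Proof.
rewrite -(sum_symprod_delta (fun a b => f a b k l + f a b l k)).
apply: eq_bigr => a _; apply: eq_bigr => b _.
rewrite -(sum_symprod_delta (f a b)) mulr_suml; apply: eq_bigr => c _.
by rewrite mulr_suml; apply: eq_bigr => d _; ring.
Qed.

End Expansion.

Arguments delta {K n}.

Section CPSBlocks.
Variables (R : realType) (n : nat).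
Local Notation I := 'I_n.

Definition cps_block (z : R[i]) (a b c d : I) : tensor4 R[i] n := fun i j k l =>
  z * (symprod (delta a) (delta b) i j * symprod (delta c) (delta d) k l)
  + z^*%C * (symprod (delta c) (delta d) i j * symprod (delta a) (delta b) k l).

Lemma cps_block_expansion (A : tensor4 R[i] n) : is_CPS A -> forall i j k l,
  \sum_a \sum_b \sum_c \sum_d cps_block (A a b c d) a b c d i j k l = 8 * A i j k l.
Proof.
move=> cpsA i j k l.
transitivity (\sum_a \sum_b \sum_c \sum_d
    A a b c d * (symprod (delta a) (delta b) i j * symprod (delta c) (delta d) k l)
  + \sum_a \sum_b \sum_c \sum_d
    (A a b c d)^*%C * (symprod (delta a) (delta b) k l * symprod (delta c) (delta d) i j)).
  rewrite -big_split; apply: eq_bigr => a _; rewrite -big_split; apply: eq_bigr => b _.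
  rewrite -big_split; apply: eq_bigr => c _; rewrite -big_split; apply: eq_bigr => d _.
  by rewrite /cps_block (mulrC (symprod (delta c) _ i j)).
rewrite !sum4_symprod_delta.
have [conjA swap12 swap34] := cpsA i j k l.
have [_ _ swap34'] := cpsA j i k l.
have [_ swap12' swap34''] := cpsA k l i j.
have [_ _ swap34'''] := cpsA l k i j.
rewrite -swap34 -swap34' -swap12 -swap34''' -swap12' -swap34'' -conjA.
ring.
Qed.

Lemma decomposable_of_blocks (T : Type) (emb : T -> I -> R[i]) (A : tensor4 R[i] n) :
  is_CPS A -> (forall a b c d, decomposable emb (cps_block (A a b c d) a b c d)) ->
  decomposable emb A.
Proof.
move=> cpsA decB.
have decS := @decomposable_sum R n T emb I (index_enum I).
apply: (decomposable_ext (decomposableZ (8^-1) (decS _ (fun a =>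
  decS _ (fun b => decS _ (fun c => decS _ (fun d => decB a b c d))))))) => i j k l.
by rewrite /= cps_block_expansion // fmorphV rmorph_nat mulKf // pnatr_eq0.
Qed.

Lemma cps_block_Re_Im z a b c d i j k l :
  let P : R := symprod (delta a) (delta b) i j * symprod (delta c) (delta d) k l in
  let Q : R := symprod (delta c) (delta d) i j * symprod (delta a) (delta b) k l in
  cps_block z a b c d i j k l =
  (complex.Re z * (P + Q))%:C + 'i%C * (complex.Im z * (P - Q))%:C.
Proof.
case: z => x y; rewrite /cps_block /symprod /delta /=.
have -> : x +i* y = x%:C + 'i%C * y%:C by rewrite [LHS]complexE.
have -> : x -i* y = x%:C - 'i%C * y%:C by rewrite [LHS]complexE /= rmorphN mulrN.
ring.
Qed.

Lemma decomposable_block z a b c d : decomposable id (cps_block z a b c d).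
Proof.
have decRe := decomposable_symprod_real (complex.Re z) (delta a) (delta b) (delta c) (delta d).
have decIm := decomposable_symprod_skew (complex.Im z) (delta a) (delta b) (delta c) (delta d).
apply: (decomposable_ext (decomposableD (decomposable_realv decRe) decIm)) => i j k l.
by rewrite cps_block_Re_Im.
Qed.

Lemma decomposable_block_real (x : R) a b c d : decomposable realv (cps_block x%:C a b c d).
Proof.
apply: (decomposable_ext
  (decomposable_symprod_real x (delta a) (delta b) (delta c) (delta d))) => i j k l.
by rewrite cps_block_Re_Im /= mul0r rmorph0 mulr0 addr0.
Qed.

End CPSBlocks.

Theorem corollary4p3 (R : realType) (n : nat) (A : tensor4 R[i] n) :
  is_CPS A ->
  (exists (m : nat) (alpha : 'I_m -> R) (p q : 'I_m -> 'I_n -> R[i]),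
      CPS_decomp A alpha p q) /\
  ((forall i j k l : 'I_n, A i j k l \is Num.real) ->
   exists (m : nat) (alpha : 'I_m -> R) (p q : 'I_m -> 'I_n -> R),
      CPS_decomp A alpha (fun r x => (p r x)%:C) (fun r x => (q r x)%:C)).
Proof.
move=> cpsA; split.
  exact: (decomposable_of_blocks cpsA (fun a b c d => decomposable_block _ a b c d)).
move=> realA; apply: (decomposable_of_blocks (emb := realv) cpsA) => a b c d.
by rewrite -(RRe_real (realA a b c d)); apply: decomposable_block_real.
Qed.
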